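(* Let $\mu\in\mathbb{R}^J$ and let $\Lambda\in\mathbb{R}^{J\times J}$ be a symmetric positive semidefinite matrix satisfying (i) $2\sum_{s=1}^J\Lambda_{rs}\ge\Lambda_{rr}$ for all $r\in[J]$, and (ii) $\Lambda_{rs}\le 0$ for all $r,s\in[J]$ with $r\ne s$. Then the function $g:\{0,1\}^J\to\mathbb{R}$, $g(y)=\mu^{\top}y+\sqrt{y^{\top}\Lambda y}$, is submodular.
   Context: $[J]=\{1,\dots,J\}$. A vector $y\in\{0,1\}^J$ is identified with the subset $R=\{j: y_j=1\}\subseteq[J]$. A set function $h$ on subsets of $[J]$ is submodular if $h(R\cup\{j\})-h(R)\ge h(S\cup\{j\})-h(S)$ for all $R\subseteq S\subseteq[J]$ and all $j\in[J]\setminus S$. *)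

From HB Require Import structures.
From mathcomp Require Import all_boot all_order all_algebra.
From mathcomp Require Import reals.
Set Implicit Arguments. Unset Strict Implicit. Unset Printing Implicit Defensive.
Import Order.TTheory GRing.Theory Num.Theory.
Local Open Scope ring_scope.

Definition indic (R : realType) (J : nat) (S : {set 'I_J}) : 'cV[R]_J :=
  \col_(j < J) (if j \in S then 1 else 0).

Definition submodular (R : realType) (J : nat) (h : {set 'I_J} -> R) : Prop :=
  forall (A B : {set 'I_J}) (j : 'I_J),
    A \subset B -> j \notin B ->
    h (j |: A) - h A >= h (j |: B) - h B.

Definition psd (R : realType) (J : nat) (L : 'M[R]_J) : Prop :=
  forall x : 'cV[R]_J, 0 <= (x^T *m L *m x) 0 0.

(* g(y) = mu^T y + sqrt(y^T Λ y), viewed as a set function. *)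
Definition gfun (R : realType) (J : nat) (mu : 'cV[R]_J) (L : 'M[R]_J)
  (S : {set 'I_J}) : R :=
  (mu^T *m indic R S) 0 0 + Num.sqrt (((indic R S)^T *m L *m indic R S) 0 0).

(** Expanding the quadratic form, [Q S := 1_S^T Λ 1_S] grows by
    [Λ_jj + 2 Σ_(k in S) Λ_jk] when [j] is added to [S].  By (ii) this gain
    is antitone in [S], and by (i) it stays nonnegative even for the largest
    admissible [S = [J] \ {j}]; so [Q] is monotone and has nonnegative,
    decreasing increments.  Since [x ↦ sqrt (x + d) - sqrt x] is decreasing
    and [d ↦ sqrt (x + d)] increasing, [sqrt ∘ Q] has decreasing increments,
    and adding the modular term [μ^T y] preserves submodularity. *)
From mathcomp Require Import all_boot all_order all_algebra.
From mathcomp Require Import reals.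
From mathcomp Require Import lra.
Import Order.TTheory GRing.Theory Num.Theory.
Local Open Scope ring_scope.

Lemma sqrtrD_sub_antitone {R : rcfType} {a b d : R} :
  0 <= a -> a <= b -> 0 <= d ->
  Num.sqrt (b + d) - Num.sqrt b <= Num.sqrt (a + d) - Num.sqrt a.
Proof.
move=> a_ge0 le_ab d_ge0; have b_ge0 := le_trans a_ge0 le_ab.
(* After squaring, the claim reduces to [sqrt ((b + d) a) <= sqrt ((a + d) b)],
   i.e. to [d a <= d b]. *)
suff : Num.sqrt (b + d) + Num.sqrt a <= Num.sqrt (a + d) + Num.sqrt b by lra.
rewrite -ler_sqr ?nnegrE ?addr_ge0 ?sqrtr_ge0 // !sqrrD !sqr_sqrtr ?addr_ge0 //.
rewrite -!sqrtrM ?addr_ge0 //.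
have : Num.sqrt ((b + d) * a) <= Num.sqrt ((a + d) * b).
  by apply: ler_wsqrtr; rewrite !mulrDl [b * a]mulrC lerD2l ler_wpM2l.
rewrite !mulr2n; lra.
Qed.

Lemma homo_subset (T : finType) (R : numDomainType) (f : {set T} -> R) :
  (forall (x : T) (A : {set T}), x \notin A -> f A <= f (x |: A)) ->
  {homo f : A B / A \subset B >-> A <= B}.
Proof.
move=> f_step A B /setUidPr <-; rewrite -[B]set_enum.
elim: (enum B) => [|x s IH]; first by rewrite set_nil setU0.
rewrite set_cons setUCA; apply: le_trans IH _.
have [xAs | xAs] := boolP (x \in A :|: [set:: s]); last exact: f_step.
by move: xAs; rewrite -sub1set => /setUidPr ->.
Qed.

Section QuadraticFormOnSets.
Variables (R : pzRingType) (J : nat) (L : 'M[R]_J).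

Definition qform (S : {set 'I_J}) : R := \sum_(i in S) \sum_(k in S) L i k.

Definition qgain (j : 'I_J) (S : {set 'I_J}) : R :=
  L j j + 2 * \sum_(k in S) L j k.

Lemma qform_setU1 (j : 'I_J) (S : {set 'I_J}) :
  L^T = L -> j \notin S -> qform (j |: S) = qform S + qgain j S.
Proof.
move=> L_sym jS; rewrite /qform /qgain.
under eq_bigr => i _ do rewrite big_setU1 //=.
rewrite big_setU1 //= big_split /= mulr_natl mulr2n.
have -> : \sum_(i in S) L i j = \sum_(k in S) L j k.
  by apply: eq_bigr => i _; rewrite -[in LHS]L_sym mxE.
by rewrite [RHS]addrC -!addrA.
Qed.

End QuadraticFormOnSets.

Arguments qform {R J} L S.
Arguments qgain {R J} L j S.

Section NonpositiveOffDiagonal.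
Variables (R : realDomainType) (J : nat) (L : 'M[R]_J).
Hypothesis L_offdiag : forall r s : 'I_J, r != s -> L r s <= 0.

Lemma qgain_antitone {j : 'I_J} {A B : {set 'I_J}} :
  A \subset B -> j \notin B -> qgain L j B <= qgain L j A.
Proof.
move=> AB jB; rewrite /qgain lerD2l ler_pM2l ?ltr0n //.
rewrite (big_setID A) /= (setIidPr AB) gerDl.
apply: sumr_le0 => k /setDP[kB _]; apply: L_offdiag.
by apply: contraNneq jB => ->.
Qed.

Hypothesis L_rowsum : forall r : 'I_J, 2 * (\sum_(s < J) L r s) >= L r r.

Lemma qgain_ge0 (j : 'I_J) (S : {set 'I_J}) : j \notin S -> 0 <= qgain L j S.
Proof.
move=> jS; have S_sub : S \subset [set~ j].
  by apply/subsetP => k kS; rewrite !inE; apply: contraNneq jS => <-.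
have j_notin : j \notin [set~ j] by rewrite !inE eqxx.
have := qgain_antitone S_sub j_notin; rewrite /qgain.
have := L_rowsum j; rewrite (bigD1 j) //= (eq_bigl (mem [set~ j])) => [|k].
- lra.
- by rewrite !inE.
Qed.

Lemma qform_subset_homo :
  L^T = L -> {homo qform L : A B / A \subset B >-> A <= B}.
Proof.
move=> L_sym; apply: homo_subset => j S jS.
by rewrite qform_setU1 // lerDl qgain_ge0.
Qed.

End NonpositiveOffDiagonal.

Section Indicators.
Variables (R : realType) (J : nat).

Lemma indic_linear (mu : 'cV[R]_J) (S : {set 'I_J}) :
  (mu^T *m indic R S) 0 0 = \sum_(i in S) mu i 0.
Proof.
rewrite mxE [RHS]big_mkcond /=; apply: eq_bigr => i _; rewrite !mxE.
by case: (i \in S); rewrite ?mulr1 ?mulr0.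
Qed.

Lemma indic_qform (L : 'M[R]_J) (S : {set 'I_J}) :
  ((indic R S)^T *m L *m indic R S) 0 0 = qform L S.
Proof.
rewrite mxE /qform exchange_big [RHS]big_mkcond /=; apply: eq_bigr => k _.
rewrite [indic _ _ k 0]mxE; case: (k \in S); rewrite ?mulr0 // mulr1.
rewrite mxE [RHS]big_mkcond; apply: eq_bigr => i _; rewrite !mxE.
by case: (i \in S); rewrite ?mul1r ?mul0r.
Qed.

Lemma gfun_setU1 (mu : 'cV[R]_J) (L : 'M[R]_J) (j : 'I_J) (S : {set 'I_J}) :
  L^T = L -> j \notin S ->
  gfun mu L (j |: S) - gfun mu L S =
  mu j 0 + (Num.sqrt (qform L S + qgain L j S) - Num.sqrt (qform L S)).
Proof.
move=> L_sym jS; rewrite /gfun !indic_linear !indic_qform qform_setU1 //.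
rewrite big_setU1 //=; lra.
Qed.

End Indicators.

Theorem proposition1 (R : realType) (J : nat) (mu : 'cV[R]_J) (L : 'M[R]_J) :
  L^T = L ->
  psd L ->
  (forall r : 'I_J, 2 * (\sum_(s < J) L r s) >= L r r) ->
  (forall r s : 'I_J, r != s -> L r s <= 0) ->
  submodular (gfun mu L).
Proof.
move=> L_sym L_psd L_rowsum L_offdiag A B j AB jB.
have jA : j \notin A by apply: contra jB; apply: (subsetP AB).
rewrite !gfun_setU1 // lerD2l.
have QA_ge0 : 0 <= qform L A by rewrite -indic_qform; apply: L_psd.
have le_QAB : qform L A <= qform L B by apply: qform_subset_homo.
have gB_ge0 : 0 <= qgain L j B by apply: qgain_ge0.
apply: le_trans (sqrtrD_sub_antitone QA_ge0 le_QAB gB_ge0) _.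
by rewrite lerD2r ler_wsqrtr // lerD2l qgain_antitone.
Qed.
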